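(* Consider an execution $\gamma_0\gamma_1\ldots$ of the unison dynamics with $\gamma_0$ satisfying $WU_0$, and let $\bot_0$, $\widetilde{p^t.r}$, $t_{p,k}$ be as in the context. Let $k\ge\bot_0+D$ be an integer and let $(p,t)$ be an event such that $t_{p,k}$ is defined and $t\ge t_{p,k}$. Then $V\big(p,\widetilde{p^t.r}-k\big)\subseteq Cover(p,t)$.
   Context: Let $G=(V,E)$ be a finite connected undirected graph, $|V|=n\ge 2$, $\mathcal N_p$ the set of neighbors of $p$, $d(p,q)$ the hop distance, $D$ the diameter, and $V(p,r)=\{q\in V: d(p,q)\le r\}$. Fix an integer $M\ge 3$; for an integer $a$, $\bar a\in\{0,\dots,M-1\}$ denotes its residue modulo $M$. Each process $p$ holds a clock $p.r\in\{0,\dots,M-1\}$; $p^t.r$ denotes its value in configuration $\gamma_t$. Integers $a,b$ are locally comparable if $\min(\overline{a-b},\overline{b-a})\le 1$, and then $b\ominus a=\overline{b-a}$ if $\overline{b-a}\le 1$, and $b\ominus a=-\overline{a-b}$ otherwise. A configuration satisfies $WU$ if for every edge $\{p,q\}$, $p.r$ and $q.r$ are locally comparable. The delay of a path $\mu=p_0p_1\ldots p_k$ is $\delta_\mu=\sum_{i=0}^{k-1}(p_{i+1}.r\ominus p_i.r)$ ($0$ if $k=0$). A configuration satisfies $WU_0$ if it satisfies $WU$ and the delay is intrinsic: for all $p,q$, all paths from $p$ to $q$ have the same delay, denoted $\delta_{(p,q)}$ ($\delta^t_{(p,q)}$ in $\gamma_t$). Dynamics: a process $p$ is enabled iff for every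 $q\in\mathcal N_p$, $q.r=p.r$ or $q.r=\overline{p.r+1}$. In a transition $\gamma_t\to\gamma_{t+1}$ a nonempty set of processes enabled in $\gamma_t$ is chosen (by an arbitrary, possibly unfair, daemon) and each of them sets $p.r:=\overline{p.r+1}$; other clocks are unchanged. Events: $(p,0)$ is an event for every $p$; $(p,t+1)$ is an event iff $p$ increments in $\gamma_t\to\gamma_{t+1}$. Causal relation $\leadsto$: for an event $(p,t)$ with $t>0$, $(p,t')\leadsto(p,t)$ where $t'$ is the largest time $<t$ such that $(p,t')$ is an event, and for each $q\in\mathcal N_p$, $(q,t')\leadsto(p,t)$ where $t'$ is the largest time $<t$ such that $(q,t')$ is an event. $\preceq$ is the reflexive–transitive closure of $\leadsto$. $Cover(p,t)$ is the set of processes $q$ such that some event $(q,t')$ satisfies $(q,t')\preceq(p,t)$. Lifting: assume $\gamma_0$ satisfies $WU_0$. Choose $p_0$ with $\delta^0_{(p_0,q)}\ge 0$ for all $q\in V$, and let $\bot_0=p_0^0.r$. Define integers $\widetilde{p^t.r}$ by $\widetilde{p^0.r}=\bot_0+\delta^0_{(p_0,p)}$, and $\widetilde{p^{t+1}.r}=\widetilde{p^t.r}+1$ if $p$ increments in $\gamma_t\to\gamma_{t+1}$, $\widetilde{p^{t+1}.r}=\widetilde{p^t.r}$ otherwise. For an integer $k$, $t_{p,k}$ is the smallest $t$ with $\widetilde{p^t.r}=k$. *)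

From HB Require Import structures.
From mathcomp Require Import all_boot all_order all_algebra.
From Stdlib Require Import Relations.
Set Implicit Arguments. Unset Strict Implicit. Unset Printing Implicit Defensive.
Import Order.TTheory GRing.Theory Num.Theory.

Section Unison.
Variables (T : finType) (e : rel T) (M : nat).

(* A configuration assigns a clock in {0,..,M-1} (encoded as nat) to each process. *)
Definition config := T -> nat.

Definition modsub (a b : nat) : nat := (a + M - b) %% M.

Definition loc_comparable (a b : nat) : bool := minn (modsub a b) (modsub b a) <= 1.

Definition ominus (b a : nat) : int :=
  if modsub b a <= 1 then Posz (modsub b a) else (- Posz (modsub a b))%R.

Fixpoint delay (c : config) (p : T) (s : seq T) : int :=
  match s with
  | [::] => 0
  | q :: s' => (ominus (c q) (c p) + delay c q s')%R
  end.

Definition WU (c : config) : Prop := forall p q, e p q -> loc_comparable (c p) (c q).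

Definition WU0 (c : config) : Prop :=
  WU c /\
  forall p (s1 s2 : seq T), path e p s1 -> path e p s2 -> last p s1 = last p s2 ->
    delay c p s1 = delay c p s2.

Definition enabled (c : config) (p : T) : Prop :=
  forall q, e p q -> c q = c p \/ c q = (c p).+1 %% M.

Definition step (c c' : config) : Prop :=
  exists S : {set T}, S != set0 /\ (forall p, p \in S -> enabled c p) /\
    forall p, c' p = if p \in S then (c p).+1 %% M else c p.

Definition execution (gamma : nat -> config) : Prop :=
  forall t, step (gamma t) (gamma t.+1).

Definition incr (gamma : nat -> config) (t : nat) (p : T) : bool :=
  gamma t.+1 p != gamma t p.

Definition is_event (gamma : nat -> config) (p : T) (t : nat) : Prop :=
  t = 0 \/ exists t', t = t'.+1 /\ incr gamma t' p.

Definition causal (gamma : nat -> config) (x y : T * nat) : Prop :=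
  let: (q, t') := x in let: (p, t) := y in
  0 < t /\ is_event gamma p t /\ (q = p \/ e p q) /\
  is_event gamma q t' /\ t' < t /\
  (forall t'', t' < t'' -> t'' < t -> ~ is_event gamma q t'').

Definition causal_le (gamma : nat -> config) : relation (T * nat) :=
  clos_refl_trans (T * nat) (causal gamma).

Definition Cover (gamma : nat -> config) (p : T) (t : nat) (q : T) : Prop :=
  exists t', is_event gamma q t' /\ causal_le gamma (q, t') (p, t).

Definition nincr (gamma : nat -> config) (p : T) (t : nat) : nat :=
  \sum_(i < t) incr gamma i p.

(* lifted clock: widetilde{p^t.r} = bot0 + delta^0_(p0,p) + #increments,
   where dl p stands for delta^0_(p0,p) *)
Definition lifted (gamma : nat -> config) (p0 : T) (dl : T -> int) (p : T) (t : nat) : int :=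
  (Posz (gamma 0%N p0) + dl p + Posz (nincr gamma p t))%R.

Definition walk_le (p q : T) (r : nat) : Prop :=
  exists s : seq T, path e p s /\ last p s = q /\ size s <= r.

Definition is_diameter (D : nat) : Prop :=
  (forall p q, walk_le p q D) /\ (exists p q, forall r, walk_le p q r -> D <= r).

End Unison.

From HB Require Import structures.
From mathcomp Require Import all_boot all_order all_algebra.
From Stdlib Require Import Relation_Operators.
Import Order.TTheory GRing.Theory Num.Theory.

Set Implicit Arguments.
Unset Strict Implicit.
Unset Printing Implicit Defensive.

(* Write the lifted clock as a natural number
     lift x t = L0 x + (number of increments of x before t),
   with L0 x = bot0 + delta^0_(p0,x).  The whole argument rests on the
   invariant "coherent t": every clock is its lifted clock modulo M, and the
   lifted clocks of two neighbours differ by at most one.  It holds initially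
   because delays along edges are the local clock differences (WU0), and it is
   preserved by every step because, as M >= 3, an enabled process has no
   neighbour whose lifted clock is one unit behind it.  That same fact drives
   the theorem: if (p,t) is an event with t > 0, then p was enabled at t-1, so
   the last event (p1,t1) of any neighbour p1 before t causally precedes (p,t)
   and carries a lifted clock >= lift p t - 1.  Walking backwards along a path
   of length |s| from p thus reaches q with a causal chain, as long as the
   lifted clock stays above the initial lifted clocks, which are all bounded
   by bot0 + D <= k. *)

Section ClockArithmetic.
Variable M : nat.

Lemma modn_shift_neq a n : 0 < n < M -> a %% M <> (a + n) %% M.
Proof.
case/andP=> n_gt0 n_ltM eq_mod.
have : a + 0 == a + n %[mod M] by rewrite addn0 eq_mod.
by rewrite eqn_modDl mod0n modn_small // => /eqP n0; rewrite -n0 in n_gt0.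
Qed.

Lemma ominus_le1 a b : (ominus M a b <= 1)%R.
Proof.
rewrite /ominus; case: ifP => [le1|_]; first by rewrite lez_nat.
by rewrite (@le_trans _ _ 0%R) // oppr_le0.
Qed.

Lemma delay_le_size (T : finType) (c : config T) p s :
  (delay M c p s <= Posz (size s))%R.
Proof.
by elim: s p => [|q s IH] p //=; rewrite intS lerD // ominus_le1.
Qed.

Lemma delay_rcons (T : finType) (c : config T) p s y :
  delay M c p (rcons s y) = (delay M c p s + ominus M (c y) (c (last p s)))%R.
Proof. by elim: s p => [|q s IH] p /=; rewrite ?addr0 ?add0r // IH addrA. Qed.

Lemma ominus_mod a b u v : a < M -> b < M -> a = u %% M ->
  Posz v = (Posz u + ominus M b a)%R -> b = v %% M.
Proof.
move=> a_lt b_lt a_u; rewrite /ominus /modsub.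
have aM : a <= b + M by rewrite ltnW // ltn_addl.
have bM : b <= a + M by rewrite ltnW // ltn_addl.
case: ifP => _ v_def.
- move: v_def; rewrite -PoszD => -[->].
  by rewrite modnDmr -modnDml -a_u subnKC // modnDr modn_small.
- have u_def : u = v + (a + M - b) %% M.
    by apply/eqP; rewrite -eqz_nat PoszD v_def subrK.
  have wb : (a + M - b) %% M + b = a + M %[mod M] by rewrite modnDml subnK.
  have : a + b = a + v %[mod M].
    rewrite {1}a_u modnDml u_def -addnA -modnDmr wb modnDmr.
    by rewrite addnA modnDr addnC.
  by move/eqP; rewrite eqn_modDl modn_small // => /eqP.
Qed.

End ClockArithmetic.

Section Executions.
Variables (T : finType) (e : rel T) (M : nat) (gamma : nat -> config T).
Hypothesis e_sym : symmetric e.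
Hypothesis M_ge3 : 3 <= M.
Hypothesis gamma_exec : execution e M gamma.

Lemma incr_enabled {s x} : incr gamma s x ->
  enabled e M (gamma s) x /\ gamma s.+1 x = (gamma s x).+1 %% M.
Proof.
have [S [_ [S_enabled gamma_next]]] := gamma_exec s.
rewrite /incr gamma_next; case: ifP => [x_S _|_]; last by rewrite eqxx.
by split=> //; apply: S_enabled.
Qed.

Lemma not_incr_const s x : ~~ incr gamma s x -> gamma s.+1 x = gamma s x.
Proof. by rewrite /incr negbK => /eqP. Qed.

Lemma last_event x n : exists2 t1, t1 <= n &
  is_event gamma x t1 /\ forall t', t1 < t' -> t' <= n -> ~ is_event gamma x t'.
Proof.
elim: n => [|n [t1 t1_le [ev1 after1]]].
  by exists 0 => //; split=> [|t' /leq_trans le /le]; [left|rewrite leqn0].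
case: (boolP (incr gamma n x)) => [x_incr|x_idle].
  by exists n.+1 => //; split=> [|t' /leq_trans le /le]; [right; exists n|rewrite ltnn].
exists t1; first exact: leqW.
split=> // t' lt_t1 t'_le; case: (ltngtP t' n.+1) => [t'_lt||->].
- exact: after1.
- by rewrite ltnNge t'_le.
- by case=> [//|[m [[<-] m_incr]]]; rewrite m_incr in x_idle.
Qed.

Variable L0 : T -> nat.

Definition lift (x : T) (t : nat) : nat := L0 x + nincr gamma x t.

Lemma liftS x t : lift x t.+1 = lift x t + incr gamma t x.
Proof. by rewrite /lift /nincr big_ord_recr addnA. Qed.

Lemma lift0 x : lift x 0 = L0 x.
Proof. by rewrite /lift /nincr big_ord0 addn0. Qed.

Lemma lift_const x t1 d : (forall i, t1 <= i < t1 + d -> ~~ incr gamma i x) ->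
  lift x (t1 + d) = lift x t1.
Proof.
elim: d => [|d IH] idle; first by rewrite addn0.
rewrite addnS liftS IH => [|i /andP[t1_le i_lt]]; last first.
  by apply: idle; rewrite t1_le addnS ltnW.
by rewrite (negbTE (idle _ _)) ?addn0 // leq_addr addnS /=.
Qed.

Definition coherent (t : nat) : Prop :=
  (forall x, gamma t x = lift x t %% M) /\
  (forall x y, e x y -> lift y t <= (lift x t).+1).

(* In a coherent configuration, no neighbour of an enabled process is behind
   it: a neighbour one unit behind would show a clock that is neither equal
   to nor one more than the enabled clock, since M >= 3. *)
Lemma enabled_lift_le t x y : coherent t -> enabled e M (gamma t) x -> e x y ->
  lift x t <= lift y t.
Proof.
move=> [gamma_lift lift_edge] x_enabled exy.
have := lift_edge y x; rewrite e_sym exy => /(_ isT).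
rewrite leq_eqVlt ltnS => /orP[/eqP x_ahead|//]; exfalso.
case: (x_enabled y exy); rewrite !gamma_lift x_ahead.
- by rewrite -addn1; apply: modn_shift_neq; rewrite (leq_trans _ M_ge3).
- rewrite -[(_ %% M).+1]addn1 modnDml addn1 -addn2; apply: modn_shift_neq.
  by rewrite M_ge3.
Qed.

Lemma coherent_step t : coherent t -> coherent t.+1.
Proof.
move=> coh; have [gamma_lift lift_edge] := coh; split=> [x|x y exy].
  rewrite liftS; case: (boolP (incr gamma t x)) => [x_incr|x_idle].
    by rewrite (incr_enabled x_incr).2 gamma_lift -addn1 modnDml.
  by rewrite not_incr_const // gamma_lift addn0.
rewrite !liftS; case: (incr gamma t y) (incr_enabled (x := y) (s := t)) => /=.
  move/(_ isT)=> [y_enabled _]; case: (incr gamma t x) => /=.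
    by rewrite !addn1 ltnS lift_edge.
  by rewrite addn0 addn1 ltnS enabled_lift_le // e_sym.
by move=> _; rewrite addn0 (leq_trans (lift_edge x y exy)) // leq_addr.
Qed.

Hypothesis coherent0 : coherent 0.

Lemma coherent_all t : coherent t.
Proof. by elim: t => [|t]; [exact: coherent0|exact: coherent_step]. Qed.

Lemma causal_predecessor {p p1 t} : is_event gamma p t.+1 -> e p p1 ->
  exists2 t1, is_event gamma p1 t1 &
    causal e gamma (p1, t1) (p, t.+1) /\ lift p t.+1 <= (lift p1 t1).+1.
Proof.
move=> ev pp1; have p_incr : incr gamma t p by case: ev => [|[m [[<-]]]].
have [t1 t1_le [ev1 after1]] := last_event p1 t.
have p1_idle : lift p1 t = lift p1 t1.
  rewrite -(subnKC t1_le); apply: lift_const => i /andP[t1_le_i i_lt].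
  apply/negP => p1_incr; apply: (after1 i.+1) => //; last by right; exists i.
  by rewrite -(subnKC t1_le).
exists t1 => //; split.
  by do !split=> //; right.
rewrite liftS p_incr addn1 ltnS -p1_idle.
exact: enabled_lift_le (coherent_all t) (incr_enabled p_incr).1 pp1.
Qed.

Variable kn : nat.
Hypothesis L0_le : forall x, L0 x <= kn.

(* Main induction: walking backwards along a path from p, the lifted clock
   drops by at most one per edge, so a path of length |s| is covered as long
   as the lifted clock of (p,t) exceeds every initial lifted clock by |s|.
   At time 0 this forces s = [::]. *)

Lemma cover_of_lift t p q s : is_event gamma p t -> path e p s -> last p s = q ->
  size s + kn <= lift p t -> Cover e gamma p t q.
Proof.
elim/ltn_ind: t p s => t IH p [|p1 s] ev /= ps lq big.
  by rewrite -lq; exists t; split=> //; apply: rt_refl.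
case/andP: ps => pp1 ps.
case: t IH ev big => [|t] IH ev big.
  by move: big; rewrite lift0 => /leq_trans/(_ (L0_le p)); rewrite addSn ltnNge leq_addl.
have [t1 ev1 [causal1 lift_le]] := causal_predecessor ev pp1.
have [_ [_ [_ [_ [t1_lt _]]]]] := causal1.
have [t' [evq chain]] : Cover e gamma p1 t1 q.
  by apply: (IH t1 t1_lt p1 s ev1 ps lq); rewrite -ltnS -addSn (leq_trans big lift_le).
by exists t'; split=> //; apply: rt_trans chain (rt_step _ _ _ _ causal1).
Qed.
End Executions.

Section InitialLifting.
Variables (T : finType) (e : rel T) (M : nat) (gamma : nat -> config T).
Variables (p0 : T) (dl : T -> int).
Hypothesis gamma0_lt : forall x, gamma 0 x < M.
Hypothesis connected : forall x y, exists s : seq T, path e x s /\ last x s = y.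
Hypothesis dl_delay : forall x (s : seq T), path e p0 s -> last p0 s = x ->
  dl x = delay M (gamma 0) p0 s.
Hypothesis dl_ge0 : forall x, (0 <= dl x)%R.

Definition L0 (x : T) : nat := gamma 0 p0 + `|dl x|%N.

Lemma L0E x : Posz (L0 x) = (Posz (gamma 0 p0) + dl x)%R.
Proof. by rewrite PoszD gez0_abs. Qed.

(* Since delays are intrinsic, along an edge the initial lifted clock
   changes by the local clock difference. *)
Lemma L0_edge x y : e x y ->
  Posz (L0 y) = (Posz (L0 x) + ominus M (gamma 0 y) (gamma 0 x))%R.
Proof.
have [s [ps <-]] := connected p0 x => exy.
have ps_y : path e p0 (rcons s y) by rewrite rcons_path ps.
rewrite !L0E -addrA (dl_delay ps_y (last_rcons _ _ _)).
by rewrite delay_rcons -(dl_delay ps erefl).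
Qed.

(* Hence the initial lifting is coherent: walk from p0 to x for the clock
   congruence, and use that local differences are at most one. *)
Lemma coherent_initial : coherent e M gamma L0 0.
Proof.
split=> [x|x y exy]; rewrite !lift0; last first.
  by rewrite -lez_nat -addn1 PoszD (L0_edge exy) lerD2l ominus_le1.
have [s [ps <-]] := connected p0 x.
elim/last_ind: s ps => [_|s y IH].
  by rewrite /L0 (@dl_delay p0 [::]) // addn0 modn_small.
rewrite rcons_path last_rcons => /andP[ps exy].
by apply: ominus_mod (L0_edge exy) => //; apply: IH.
Qed.

(* Delays are bounded by path lengths, so every initial lifted clock is at
   most bot0 + D. *)
Lemma L0_le_diameter D : (forall x, walk_le e p0 x D) ->
  forall x, L0 x <= gamma 0 p0 + D.
Proof.
move=> walk x; have [s [ps [lx size_s]]] := walk x.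
rewrite leq_add2l -lez_nat gez0_abs // (dl_delay ps lx).
exact: le_trans (delay_le_size _ _ _ _) _.
Qed.
End InitialLifting.

Unset Implicit Arguments.

Theorem lemma3 (T : finType) (e : rel T) (M : nat) (D : nat)
  (gamma : nat -> config T) (p0 : T) (dl : T -> int) (k : int) (p : T) (t : nat) :
  (* graph: finite, connected, undirected, simple, n >= 2 *)
  1 < #|T| ->
  symmetric e -> irreflexive e ->
  (forall x y, exists s : seq T, path e x s /\ last x s = y) ->
  is_diameter e D ->
  (* clocks *)
  3 <= M ->
  (forall x, gamma 0 x < M) ->
  execution e M gamma ->
  WU0 e M (gamma 0) ->
  (* dl x = delta^0_(p0,x) (intrinsic delay), and p0 has all delays >= 0 *)
  (forall x (s : seq T), path e p0 s -> last p0 s = x -> dl x = delay M (gamma 0) p0 s) ->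
  (forall x, (0 <= dl x)%R) ->
  (* k >= bot0 + D *)
  (Posz (gamma 0%N p0) + Posz D <= k)%R ->
  is_event gamma p t ->
  (* t_{p,k} is defined and t >= t_{p,k} *)
  (exists tpk, lifted gamma p0 dl p tpk = k /\
     (forall t', lifted gamma p0 dl p t' = k -> tpk <= t') /\ tpk <= t) ->
  forall q, (exists s : seq T, path e p s /\ last p s = q /\
                 (Posz (size s) <= lifted gamma p0 dl p t - k)%R) ->
  Cover e gamma p t q.
Proof.
move=> _ e_sym _ connected [diam _] M_ge3 gamma0_lt exec _ dl_delay dl_ge0 k_ge ev _
  q [s [ps [lq size_s]]].
have lifted_lift x t' :
    lifted gamma p0 dl x t' = Posz (lift gamma (L0 gamma p0 dl) x t').
  by rewrite /lifted /lift PoszD L0E.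
apply: (cover_of_lift e_sym M_ge3 exec
  (coherent_initial gamma0_lt connected dl_delay dl_ge0)
  (L0_le_diameter dl_delay dl_ge0 (diam p0)) ev ps lq).
rewrite -lez_nat -lifted_lift !PoszD -lerBrDr.
exact: le_trans size_s (lerB (lexx _) k_ge).
Qed.
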